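(* If $\sum_{i=1}^M b_i\ge1$, then for every $\epsilon>0$ the energy-adequate solution $\mathbf r^\star$ is feasible for Problem 1, i.e. $r^\star_l>0$ and $\sigma_l(\mathbf r^\star)\le b_l$ for all $l$.
   Context: Fix an integer $M\ge1$, weights $w_1,\dots,w_M>0$, constants $b_1,\dots,b_M>0$, and $\epsilon>0$. For $\mathbf r\in(0,\infty)^M$ write $S(\mathbf r)=\sum_{i=1}^M r_i$ and define $$\sigma_l(\mathbf r)=\frac{(1-e^{-r_l\epsilon})S(\mathbf r)+r_le^{-r_l\epsilon}}{S(\mathbf r)+1}.$$ Problem 1's constraint set is $\{\mathbf r\in(0,\infty)^M:\sigma_l(\mathbf r)\le b_l\ \forall l\}$. Energy-adequate solution (when $\sum_i b_i\ge1$): let $\beta^\star\in[0,\max_l b_l/\sqrt{w_l}]$ be the root of $\sum_{i=1}^M\min\{b_i,\beta^\star\sqrt{w_i}\}=1$, let $x^\star=-\tfrac12+\sqrt{\tfrac14+\tfrac1\epsilon}$, and set $r^\star_l=\min\{b_l,\beta^\star\sqrt{w_l}\}\,x^\star$. *)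

(* real analysis (exp, sqrt). Indices l = 0..M-1. *)
From Stdlib Require Import Reals Lra.
Open Scope R_scope.

Fixpoint sumR (M : nat) (f : nat -> R) : R :=
  match M with
  | O => 0
  | S n => sumR n f + f n
  end.

Definition sigma_l (M : nat) (eps : R) (r : nat -> R) (l : nat) : R :=
  ((1 - exp (- (r l * eps))) * sumR M r + r l * exp (- (r l * eps)))
  / (sumR M r + 1).

Definition xstar (eps : R) : R := - / 2 + sqrt (/ 4 + / eps).

Definition rstar (b w : nat -> R) (beta eps : R) (l : nat) : R :=
  Rmin (b l) (beta * sqrt (w l)) * xstar eps.

(* Write m_l = min(b_l, beta sqrt w_l) and x = xstar eps.  The shares m_l are
   positive and sum to 1, and rstar = m x, so the total rate is S = x.  Since x
   is the positive root of x^2 + x = 1/eps we get x^2 eps <= 1, and together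
   with 1 - exp(-t) <= t this forces sigma_l <= m_l <= b_l. *)
From Stdlib Require Import Reals Lra Lia.
Open Scope R_scope.

Lemma sumR_ge0 (M : nat) (f : nat -> R) :
  (forall i, (i < M)%nat -> 0 <= f i) -> 0 <= sumR M f.
Proof.
  induction M as [|M IH]; simpl; intros Hf; [lra|].
  assert (0 <= f M) by (apply Hf; lia).
  assert (0 <= sumR M f) by (apply IH; intros; apply Hf; lia).
  lra.
Qed.

Lemma sumR_le_term (M : nat) (f : nat -> R) (l : nat) :
  (forall i, (i < M)%nat -> 0 <= f i) -> (l < M)%nat -> f l <= sumR M f.
Proof.
  induction M as [|M IH]; simpl; intros Hf Hl; [lia|].
  assert (0 <= f M) by (apply Hf; lia).
  destruct (Nat.eq_dec l M) as [->|Hne].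
  - assert (0 <= sumR M f) by (apply sumR_ge0; intros; apply Hf; lia). lra.
  - assert (f l <= sumR M f) by (apply IH; [intros; apply Hf; lia | lia]). lra.
Qed.

Lemma sumR_eq0 (M : nat) (f : nat -> R) :
  (forall i, (i < M)%nat -> f i = 0) -> sumR M f = 0.
Proof.
  induction M as [|M IH]; simpl; intros Hf; [reflexivity|].
  rewrite IH, Hf; [ring | lia | intros; apply Hf; lia].
Qed.

Lemma sumR_mulr (M : nat) (f : nat -> R) (c : R) :
  sumR M (fun i => f i * c) = sumR M f * c.
Proof. induction M as [|M IH]; simpl; [ring | rewrite IH; ring]. Qed.

Lemma xstar_pos (eps : R) : 0 < eps -> 0 < xstar eps.
Proof.
  intros He. unfold xstar.
  assert (0 < / eps) by (apply Rinv_0_lt_compat; lra).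
  assert (/ 2 < sqrt (/ 4 + / eps)); [|lra].
  rewrite <- (sqrt_pow2 (/ 2)) by lra. apply sqrt_lt_1_alt. simpl; lra.
Qed.

Lemma xstar_root (eps : R) : 0 < eps -> xstar eps * xstar eps + xstar eps = / eps.
Proof.
  intros He. unfold xstar.
  assert (0 < / eps) by (apply Rinv_0_lt_compat; lra).
  assert (sqrt (/ 4 + / eps) * sqrt (/ 4 + / eps) = / 4 + / eps) by (apply sqrt_sqrt; lra).
  nra.
Qed.

Lemma xstar_sq_mul_le1 (eps : R) : 0 < eps -> xstar eps * xstar eps * eps <= 1.
Proof.
  intros He. pose proof (xstar_pos eps He) as Hx.
  assert ((xstar eps * xstar eps + xstar eps) * eps = 1)
    by (rewrite xstar_root by exact He; field; lra).
  nra.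
Qed.

Lemma sigma_l_le_share (M : nat) (eps : R) (r : nat -> R) (l : nat) (m : R) :
  0 < eps -> 0 <= m <= 1 -> 0 <= sumR M r ->
  sumR M r * sumR M r * eps <= 1 ->
  r l = m * sumR M r ->
  sigma_l M eps r l <= m.
Proof.
  intros He Hm HS0 HS2 Hrl. unfold sigma_l. rewrite Hrl.
  set (S := sumR M r) in *.
  set (e := exp (- (m * S * eps))).
  assert (He1 : 1 - e <= m * S * eps)
    by (generalize (exp_ineq1_le (- (m * S * eps))); unfold e; lra).
  assert (0 < e) by apply exp_pos.
  apply (Rmult_le_reg_r (S + 1)); [lra|].
  unfold Rdiv. rewrite Rmult_assoc, Rinv_l, Rmult_1_r by lra.
  (* the claim is  S (1 - m) (1 - e) <= m *)
  assert (S * (1 - m) * (1 - e) <= S * (1 - m) * (m * S * eps))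
    by (apply Rmult_le_compat_l; [apply Rmult_le_pos|]; lra).
  assert (m * (1 - m) * (S * S * eps) <= m * (1 - m)) by
    (rewrite <- (Rmult_1_r (m * (1 - m))) at 2;
     apply Rmult_le_compat_l; [apply Rmult_le_pos|]; lra).
  nra.
Qed.

Theorem lemma1 (M : nat) (w b : nat -> R) (eps beta : R) :
  (1 <= M)%nat ->
  (forall i, (i < M)%nat -> 0 < w i) ->
  (forall i, (i < M)%nat -> 0 < b i) ->
  0 < eps ->
  1 <= sumR M b ->
  (* beta is the root beta* in [0, max_l b_l / sqrt w_l] *)
  0 <= beta ->
  (exists l, (l < M)%nat /\ beta <= b l / sqrt (w l)) ->
  sumR M (fun i => Rmin (b i) (beta * sqrt (w i))) = 1 ->
  forall l, (l < M)%nat ->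
    0 < rstar b w beta eps l /\
    sigma_l M eps (rstar b w beta eps) l <= b l.
Proof.
  intros _ Hw Hb He _ Hbeta _ Hsum l Hl.
  set (m := fun i => Rmin (b i) (beta * sqrt (w i))) in Hsum.
  assert (Hbeta_pos : 0 < beta).
  { destruct (Req_dec beta 0) as [Hbeta0|]; [|lra].
    rewrite sumR_eq0 in Hsum; [lra|].
    intros i Hi. unfold m. rewrite Hbeta0, Rmult_0_l.
    apply Rmin_right. left; auto. }
  assert (Hm : forall i, (i < M)%nat -> 0 < m i).
  { intros i Hi. apply Rmin_pos; auto.
    apply Rmult_lt_0_compat; auto. apply sqrt_lt_R0; auto. }
  assert (Hml1 : m l <= 1)
    by (rewrite <- Hsum; apply sumR_le_term; auto; intros; left; auto).
  assert (Htotal : sumR M (rstar b w beta eps) = xstar eps)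
    by (unfold rstar; rewrite sumR_mulr; fold m; rewrite Hsum; ring).
  split.
  - exact (Rmult_lt_0_compat _ _ (Hm l Hl) (xstar_pos eps He)).
  - apply Rle_trans with (m l); [|apply Rmin_l].
    apply sigma_l_le_share; rewrite ?Htotal.
    + exact He.
    + pose proof (Hm l Hl). lra.
    + left; apply xstar_pos; exact He.
    + apply xstar_sq_mul_le1; exact He.
    + unfold rstar. reflexivity.
Qed.
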